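(* Suppose $\dim_{\mathbb{C}}N=n-m\le 3$, where $N=\mathrm{span}_{\mathbb{C}}\{I_{m+1},\dots,I_n\}$ is the nilpotent subalgebra of $\mathbb{A}_n^m$. Then for every circle $C$ as described in the context, $\lambda:=\int_C\zeta^{-1}\,d\zeta=2\pi i$ (that is, $2\pi i$ times the unit of $\mathbb{A}_n^m$).
   Context: Fix natural numbers $m\le n$. $\mathbb{A}_n^m$ is a commutative associative algebra with unit over $\mathbb{C}$ with a basis $\{I_k\}_{k=1}^n$ satisfying: (1) for $r,s\in\{1,\dots,m\}$, $I_rI_s=0$ if $r\ne s$ and $I_rI_r=I_r$; (2) for $r,s\in\{m+1,\dots,n\}$, $I_rI_s=\sum_{k=\max\{r,s\}+1}^{n}\Upsilon^{s}_{r,k}I_k$ with constants $\Upsilon^s_{r,k}\in\mathbb{C}$; (3) for each $s\in\{m+1,\dots,n\}$ there is a unique $u_s\in\{1,\dots,m\}$ such that for $r\in\{1,\dots,m\}$, $I_rI_s=I_s$ if $r=u_s$ and $0$ otherwise. Unit $1=\sum_{u=1}^mI_u$; $\mathbb{A}_n^m=S\oplus_sN$ with $S=\mathrm{span}\{I_1,\dots,I_m\}$ and $N=\mathrm{span}\{I_{m+1},\dots,I_n\}$. $f_u(\sum_k\lambda_kI_k)=\lambda_u$. Let $e_1=1$, $e_2=\sum_ka_kI_k$, $e_3=\sum_kb_kI_k$ ($a_k,b_k\in\mathbb{C}$) be linearly independent over $\mathbb{R}$; $\zeta=xe_1+ye_2+ze_3$ ($x,y,z\in\mathbb{R}$), $E_3$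 their real span. Standing assumption: $f_u(E_3)=\mathbb{C}$ for all $u=1,\dots,m$. $\zeta$ is non-invertible exactly when $(x,y,z)$ lies on one of the lines $L_u=\{x+y\,\mathrm{Re}\,a_u+z\,\mathrm{Re}\,b_u=0,\ y\,\mathrm{Im}\,a_u+z\,\mathrm{Im}\,b_u=0\}$. The circle: $C\subset E_3$ is $C=\{xe_1+ye_2+ze_3:(x,y,z)\in C'\}$ for a Euclidean circle $C'\subset\mathbb{R}^3$ of radius $R>0$ centered at the origin, such that for every $u$ the image $f_u(C)$ is a positively oriented closed Jordan curve in $\mathbb{C}$ bounding a domain containing $0$. Integral: for a Jordan rectifiable curve $\gamma$ and continuous $\Psi=\sum_k(U_k+iV_k)I_k$ on $\gamma_\zeta$, $\int_{\gamma_\zeta}\Psi d\zeta:=\sum_kI_k\int_\gamma(U_k+iV_k)dx+\sum_ke_2I_k\int_\gamma(U_k+iV_k)dy+\sum_ke_3I_k\int_\gamma(U_k+iV_k)dz$. *)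

From mathcomp Require Import all_boot all_algebra.
From mathcomp Require Import all_classical all_reals all_analysis.
From mathcomp Require Import complex.
Import numFieldNormedType.Exports.
Set Implicit Arguments. Unset Strict Implicit. Unset Printing Implicit Defensive.
Import GRing.Theory Num.Theory.
Local Open Scope ring_scope.
Local Open Scope complex_scope.

(* Elements of A_n^m are written in the basis I_1..I_n; the paper's index j
   (1 <= j <= n) is the ordinal j-1 : 'I_n.  Thus S = span{I_k | k < m}
   and N = span{I_k | m <= k < n} (0-based). *)
Definition iC (R : realType) : R[i] := Complex 0 1.

Definition alg (R : realType) (n : nat) := {ffun 'I_n -> R[i]}.

(* Coefficient of I_k in the product I_r I_s, following rules (1)-(3):
   u : index s in N |-> u_s in S ;  Ups s r k = Upsilon^s_{r,k}. *)
Definition sconst (R : realType) (n m : nat) (u : 'I_n -> 'I_n)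
    (Ups : 'I_n -> 'I_n -> 'I_n -> R[i]) (r s k : 'I_n) : R[i] :=
  if (r < m)%N then
    if (s < m)%N then ((r == s) && (k == r))%:R
    else ((r == u s) && (k == s))%:R
  else if (s < m)%N then ((s == u r) && (k == r))%:R
  else if (maxn r s < k)%N then Ups s r k else 0.

Definition amul (R : realType) (n m : nat) (u : 'I_n -> 'I_n)
    (Ups : 'I_n -> 'I_n -> 'I_n -> R[i]) (x y : alg R n) : alg R n :=
  [ffun k => \sum_(r < n) \sum_(s < n) x r * y s * sconst m u Ups r s k].

Definition aone (R : realType) (n m : nat) : alg R n :=
  [ffun k : 'I_n => ((k < m)%N)%:R].

Definition comm_assoc (R : realType) (n m : nat) (u : 'I_n -> 'I_n)
    (Ups : 'I_n -> 'I_n -> 'I_n -> R[i]) : Prop :=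
  (forall x y : alg R n, amul m u Ups x y = amul m u Ups y x) /\
  (forall x y z : alg R n,
      amul m u Ups (amul m u Ups x y) z = amul m u Ups x (amul m u Ups y z)).

(* zeta = x e_1 + y e_2 + z e_3, with e_1 = 1, e_2 = a, e_3 = b *)
Definition zeta (R : realType) (n m : nat) (a b : alg R n) (x y z : R)
    : alg R n :=
  [ffun k => x%:C * aone R n m k + y%:C * a k + z%:C * b k].

Definition ainv (R : realType) (n m : nat) (u : 'I_n -> 'I_n)
    (Ups : 'I_n -> 'I_n -> 'I_n -> R[i]) (x : alg R n) : alg R n :=
  xget 0 (fun y : alg R n => amul m u Ups x y = aone R n m).

Definition cint (R : realType) (t0 t1 : R) (f : R -> R[i]) : R[i] :=
  (Rintegral lebesgue_measure `[t0, t1] (fun t => complex.Re (f t)))%:C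
  + iC R * (Rintegral lebesgue_measure `[t0, t1] (fun t => complex.Im (f t)))%:C.

Definition cderive (R : realType) (g : R -> R[i]) (t : R) : R[i] :=
  (derive1 (fun s => complex.Re (g s)) t)%:C
  + iC R * (derive1 (fun s => complex.Im (g s)) t)%:C.

(* The curve integral  int_{gamma_zeta} Psi d zeta  of the context, for the
   curve gamma(t) = (g 0 t, g 1 t, g 2 t), t in [t0,t1] (C^1 parametrization,
   so  int_gamma F dx = int_{t0}^{t1} F(gamma t) x'(t) dt ), where Psi t is
   the value of Psi at the point zeta(gamma t):
     sum_k I_k int (U_k+iV_k) dx + e2 sum_k I_k int (U_k+iV_k) dy
                                 + e3 sum_k I_k int (U_k+iV_k) dz. *)
Definition curve_int (R : realType) (n m : nat) (u : 'I_n -> 'I_n)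
    (Ups : 'I_n -> 'I_n -> 'I_n -> R[i]) (a b : alg R n)
    (g : 'I_3 -> R -> R) (t0 t1 : R) (Psi : R -> alg R n) : alg R n :=
  let J (j : 'I_3) : alg R n :=
    [ffun k => cint t0 t1 (fun t => Psi t k * (derive1 (g j) t)%:C)] in
  J 0 + amul m u Ups a (J 1) + amul m u Ups b (J 2%:R).

Definition jordan_closed (R : realType) (t0 t1 : R) (g : R -> R[i]) : Prop :=
  continuous (fun t : R => complex.Re (g t)) /\
  continuous (fun t : R => complex.Im (g t)) /\
  g t0 = g t1 /\
  (forall s t : R, t0 <= s < t1 -> t0 <= t < t1 -> g s = g t -> s = t).

Definition winding0 (R : realType) (t0 t1 : R) (g : R -> R[i]) : R[i] :=
  cint t0 t1 (fun t => cderive g t / g t) / ((2 * pi)%:C * iC R).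

(* g is a positively oriented closed Jordan curve bounding a domain that
   contains 0: Jordan, and 0 lies inside with index +1 (for a Jordan curve
   the index is +1 at interior points iff the curve is positively oriented,
   and 0 at exterior points). *)
Definition pos_jordan_around0 (R : realType) (t0 t1 : R) (g : R -> R[i])
    : Prop :=
  jordan_closed t0 t1 g /\ (forall t : R, t0 <= t <= t1 -> g t != 0) /\
  winding0 t0 t1 g = 1.

(* Let sigma be the inverse of zeta on the semisimple coordinates I_1, ..., I_m
   (and 0 on N).  Then W = sigma zeta - 1 lies in N, and since dim N <= 3 every
   product of four elements of N vanishes, so zeta^-1 = sigma (1 - W + W^2 - W^3).
   Along C, on the coordinates of N the integrand zeta' zeta^-1 reduces to
   (1 - W + W^2) W', the derivative of the periodic function W - W^2/2 + W^3/3,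
   so it integrates to 0.  On a semisimple coordinate u the integrand is
   f_u(zeta)' / f_u(zeta), whose integral is 2 pi i times the index of f_u(C)
   about 0, that is 2 pi i. *)

From HB Require Import structures.
From mathcomp Require Import all_boot all_algebra.
From mathcomp Require Import all_classical all_reals all_analysis.
From mathcomp Require Import complex.
From mathcomp Require Import ring lra zify.
Import numFieldNormedType.Exports.
Set Implicit Arguments. Unset Strict Implicit. Unset Printing Implicit Defensive.
Import GRing.Theory Num.Theory.
Local Open Scope ring_scope.
Local Open Scope complex_scope.

Local Notation Re := complex.Re.
Local Notation Im := complex.Im.

Section RealCalculus.
Variable R : realType.
Implicit Types (h k : R -> R) (t : R).

Lemma is_deriveD_fun h k (h' k' : R) t : is_derive t 1 h h' -> is_derive t 1 k k' ->
  is_derive t 1 (fun s => h s + k s) (h' + k').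
Proof. by move=> dh dk; have := is_deriveD dh dk. Qed.

Lemma is_deriveB_fun h k (h' k' : R) t : is_derive t 1 h h' -> is_derive t 1 k k' ->
  is_derive t 1 (fun s => h s - k s) (h' - k').
Proof. by move=> dh dk; have := is_deriveB dh dk. Qed.

Lemma is_deriveN_fun h (h' : R) t : is_derive t 1 h h' ->
  is_derive t 1 (fun s => - h s) (- h').
Proof. by move=> dh; have := is_deriveN dh. Qed.

Lemma is_deriveM_fun h k (h' k' : R) t : is_derive t 1 h h' -> is_derive t 1 k k' ->
  is_derive t 1 (fun s => h s * k s) (h t * k' + k t * h').
Proof. by move=> dh dk; have := is_deriveM dh dk. Qed.

Lemma is_deriveV_fun h (h' : R) t : is_derive t 1 h h' -> h t != 0 ->
  is_derive t 1 (fun s => (h s)^-1) (- (h t) ^- 2 * h').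
Proof.
move=> dh ht0; apply: DeriveDef; first by apply: derivableV => //; case: dh.
by rewrite deriveV ?(ex_derive dh) // derive_val.
Qed.

Lemma continuousD_fun h k t : {for t, continuous h} -> {for t, continuous k} ->
  {for t, continuous (fun s => h s + k s)}.
Proof. by move=> ch ck; have := continuousD ch ck. Qed.

Lemma continuousB_fun h k t : {for t, continuous h} -> {for t, continuous k} ->
  {for t, continuous (fun s => h s - k s)}.
Proof. by move=> ch ck; have := continuousB ch ck. Qed.

Lemma continuousN_fun h t : {for t, continuous h} ->
  {for t, continuous (fun s => - h s)}.
Proof. by move=> ch; have := continuousN ch. Qed.

Lemma continuousM_fun h k t : {for t, continuous h} -> {for t, continuous k} ->
  {for t, continuous (fun s => h s * k s)}.
Proof. by move=> ch ck; have := continuousM ch ck. Qed.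

Lemma continuousV_fun h t : {for t, continuous h} -> h t != 0 ->
  {for t, continuous (fun s => (h s)^-1)}.
Proof. by move=> ch ht0; have := continuousV ht0 ch. Qed.

Lemma is_derive_continuous h (h' : R -> R) : (forall t, is_derive t 1 h (h' t)) -> continuous h.
Proof.
by move=> dh t; apply/differentiable_continuous/derivable1_diffP; case: (dh t).
Qed.

Lemma Rintegral_FTC h (h' : R -> R) (T : R) : 0 < T -> (forall t, is_derive t 1 h (h' t)) ->
  continuous h' -> Rintegral lebesgue_measure `[0, T] h' = h T - h 0.
Proof.
move=> T_gt0 dh ch'; have ch := is_derive_continuous dh.
rewrite /Rintegral (@continuous_FTC2 _ h' h) //.
- exact: continuous_subspaceT.
- split; first by move=> x _; case: (dh x).
  + by apply: cvg_at_right_filter; apply: ch.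
  + by apply: cvg_at_left_filter; apply: ch.
- by move=> x _; rewrite derive1E; case: (dh x).
Qed.

Lemma continuous_integrable h (t0 t1 : R) : continuous h ->
  lebesgue_measure.-integrable `[t0, t1] (EFin \o h).
Proof.
move=> ch; apply: continuous_compact_integrable; first exact: segment_compact.
exact: continuous_subspaceT.
Qed.

End RealCalculus.

Section ComplexCalculus.
Variable R : realType.
Implicit Types (x y : R[i]) (f g : R -> R[i]).

Lemma ReD x y : Re (x + y) = Re x + Re y. Proof. by case: x; case: y. Qed.
Lemma ImD x y : Im (x + y) = Im x + Im y. Proof. by case: x; case: y. Qed.
Lemma ReN x : Re (- x) = - Re x. Proof. by case: x. Qed.
Lemma ImN x : Im (- x) = - Im x. Proof. by case: x. Qed.
Lemma ReM x y : Re (x * y) = Re x * Re y - Im x * Im y.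
Proof. by case: x; case: y. Qed.
Lemma ImM x y : Im (x * y) = Re x * Im y + Im x * Re y.
Proof. by case: x => ? ?; case: y => ? ? /=; ring. Qed.
Lemma ReV x : Re x^-1 = Re x * (Re x * Re x + Im x * Im x)^-1.
Proof. by case: x => ? ? /=; rewrite !expr2. Qed.
Lemma ImV x : Im x^-1 = - Im x * (Re x * Re x + Im x * Im x)^-1.
Proof. by case: x => ? ? /=; rewrite !expr2 mulNr. Qed.

Lemma complexP x y : Re x = Re y -> Im x = Im y -> x = y.
Proof. by case: x; case: y => ? ? ? ? /= -> ->. Qed.

Lemma normc2_neq0 x : x != 0 -> Re x * Re x + Im x * Im x != 0.
Proof.
apply: contra; rewrite -!expr2 paddr_eq0 ?sqr_ge0 // !sqrf_eq0 => /andP[re0 im0].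
by case: x re0 im0 => ? ? /= /eqP-> /eqP->.
Qed.

Definition ccontinuous f :=
  continuous (fun t => Re (f t)) /\ continuous (fun t => Im (f t)).

Definition C1 f f' :=
  (forall t : R, is_derive t (1 : R) (fun s => Re (f s)) (Re (f' t)) /\
             is_derive t (1 : R) (fun s => Im (f s)) (Im (f' t))) /\ ccontinuous f'.

Lemma ccontinuous_cst x : ccontinuous (fun _ => x).
Proof. by split=> t; apply: cst_continuous. Qed.

Lemma ccontinuous_real (h : R -> R) : continuous h -> ccontinuous (fun t => (h t)%:C).
Proof. by move=> ch; split=> //= t; apply: cst_continuous. Qed.

Lemma ccontinuousD f g : ccontinuous f -> ccontinuous g ->
  ccontinuous (fun t => f t + g t).
Proof.
move=> [cf1 cf2] [cg1 cg2].
rewrite /ccontinuous (funext (fun t => ReD (f t) (g t))).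
rewrite (funext (fun t => ImD (f t) (g t))).
by split=> t; apply: continuousD_fun; [apply: cf1|apply: cg1|apply: cf2|apply: cg2].
Qed.

Lemma ccontinuousN f : ccontinuous f -> ccontinuous (fun t => - f t).
Proof.
move=> [cf1 cf2].
rewrite /ccontinuous (funext (fun t => ReN (f t))) (funext (fun t => ImN (f t))).
by split=> t; apply: continuousN_fun; [apply: cf1|apply: cf2].
Qed.

Lemma ccontinuousM f g : ccontinuous f -> ccontinuous g ->
  ccontinuous (fun t => f t * g t).
Proof.
move=> [cf1 cf2] [cg1 cg2].
rewrite /ccontinuous (funext (fun t => ReM (f t) (g t))).
rewrite (funext (fun t => ImM (f t) (g t))).
split=> t.
  exact: continuousB_fun (continuousM_fun (cf1 t) (cg1 t))
                         (continuousM_fun (cf2 t) (cg2 t)).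
exact: continuousD_fun (continuousM_fun (cf1 t) (cg2 t))
                       (continuousM_fun (cf2 t) (cg1 t)).
Qed.

Lemma ccontinuousV f : ccontinuous f -> (forall t, f t != 0) ->
  ccontinuous (fun t => (f t)^-1).
Proof.
move=> [cf1 cf2] f_neq0.
have cN t : {for t, continuous (fun s =>
    (Re (f s) * Re (f s) + Im (f s) * Im (f s))^-1)}.
  exact: continuousV_fun (continuousD_fun (continuousM_fun (cf1 t) (cf1 t))
    (continuousM_fun (cf2 t) (cf2 t))) (normc2_neq0 (f_neq0 t)).
rewrite /ccontinuous (funext (fun t => ReV (f t))) (funext (fun t => ImV (f t))).
split=> t; first exact: continuousM_fun (cf1 t) (cN t).
exact: continuousM_fun (continuousN_fun (cf2 t)) (cN t).
Qed.

Lemma ccontinuous_sum n (F : 'I_n -> R -> R[i]) : (forall i, ccontinuous (F i)) ->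
  ccontinuous (fun t => \sum_(i < n) F i t).
Proof.
elim: n F => [|n IH] F cF.
  by under eq_fun do rewrite big_ord0; apply: ccontinuous_cst.
under eq_fun do rewrite big_ord_recl.
by apply: ccontinuousD => //; apply: IH.
Qed.

Lemma C1_ccontinuous f f' : C1 f f' -> ccontinuous f.
Proof.
by move=> [df _]; split; apply: is_derive_continuous => t; case: (df t).
Qed.

Lemma C1_ext f g f' g' : C1 f f' -> f =1 g -> f' =1 g' -> C1 g g'.
Proof. by move=> C1f /funext <- /funext <-. Qed.

Lemma cderive_C1 f f' t : C1 f f' -> cderive f t = f' t.
Proof.
move=> [df _]; have [[_ dRe] [_ dIm]] := df t.
by rewrite /cderive !derive1E dRe dIm; apply: complexP => /=; ring.
Qed.

Lemma C1_cst x : C1 (fun _ => x) (fun _ => 0).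
Proof. by split; [move=> t; split; apply: is_derive_cst|exact: ccontinuous_cst]. Qed.

Lemma C1_real (h h' : R -> R) : (forall t : R, is_derive t 1 h (h' t)) -> continuous h' ->
  C1 (fun t => (h t)%:C) (fun t => (h' t)%:C).
Proof.
by move=> dh ch'; split; [move=> t; split=> //=; apply: is_derive_cst|
  exact: ccontinuous_real].
Qed.

Lemma C1D f g f' g' : C1 f f' -> C1 g g' -> C1 (fun t => f t + g t) (fun t => f' t + g' t).
Proof.
move=> [df cf'] [dg cg']; split; last exact: ccontinuousD.
rewrite (funext (fun t => ReD (f t) (g t))) (funext (fun t => ImD (f t) (g t))).
move=> t; have [df1 df2] := df t; have [dg1 dg2] := dg t.
by rewrite ReD ImD; split; apply: is_deriveD_fun.
Qed.

Lemma C1N f f' : C1 f f' -> C1 (fun t => - f t) (fun t => - f' t).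
Proof.
move=> [df cf']; split; last exact: ccontinuousN.
rewrite (funext (fun t => ReN (f t))) (funext (fun t => ImN (f t))).
move=> t; have [df1 df2] := df t.
by rewrite ReN ImN; split; apply: is_deriveN_fun.
Qed.

Lemma C1M f g f' g' : C1 f f' -> C1 g g' ->
  C1 (fun t => f t * g t) (fun t => f' t * g t + f t * g' t).
Proof.
move=> C1f C1g; have cf := C1_ccontinuous C1f; have cg := C1_ccontinuous C1g.
case: C1f C1g => [df cf'] [dg cg']; split; last first.
  by apply: ccontinuousD; apply: ccontinuousM.
rewrite (funext (fun t => ReM (f t) (g t))) (funext (fun t => ImM (f t) (g t))).
move=> t; have [df1 df2] := df t; have [dg1 dg2] := dg t; split.
  apply: is_derive_eq (is_deriveB_fun (is_deriveM_fun df1 dg1) (is_deriveM_fun df2 dg2)) _.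
  by rewrite ReD !ReM; ring.
apply: is_derive_eq (is_deriveD_fun (is_deriveM_fun df1 dg2) (is_deriveM_fun df2 dg1)) _.
by rewrite ImD !ImM; ring.
Qed.

Lemma C1V f f' : C1 f f' -> (forall t, f t != 0) ->
  C1 (fun t => (f t)^-1) (fun t => - f' t * (f t)^-1 ^+ 2).
Proof.
move=> C1f f_neq0; have cf := C1_ccontinuous C1f; case: C1f => [df cf'].
split; last first.
  apply: ccontinuousM; first exact: ccontinuousN.
  by under eq_fun do rewrite expr2; apply: ccontinuousM; apply: ccontinuousV.
move=> t; have [df1 df2] := df t.
have N_neq0 := normc2_neq0 (f_neq0 t).
have dN := is_deriveV_fun
  (is_deriveD_fun (is_deriveM_fun df1 df1) (is_deriveM_fun df2 df2)) N_neq0.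
split.
  under eq_fun do rewrite ReV.
  apply: is_derive_eq (is_deriveM_fun df1 dN) _.
  move: N_neq0; case: (f t) => ? ?; case: (f' t) => ? ? /= N_neq0.
  by field; rewrite !expr2.
under eq_fun do rewrite ImV.
apply: is_derive_eq (is_deriveM_fun (is_deriveN_fun df2) dN) _.
move: N_neq0; case: (f t) => ? ?; case: (f' t) => ? ? /= N_neq0.
by field; rewrite !expr2.
Qed.

Lemma C1_sum n (F F' : 'I_n -> R -> R[i]) : (forall i, C1 (F i) (F' i)) ->
  C1 (fun t => \sum_(i < n) F i t) (fun t => \sum_(i < n) F' i t).
Proof.
elim: n F F' => [|n IH] F F' C1F.
  by under eq_fun do rewrite big_ord0; under [X in C1 _ X]eq_fun do rewrite big_ord0;
    exact: C1_cst.
under eq_fun do rewrite big_ord_recl; under [X in C1 _ X]eq_fun do rewrite big_ord_recl.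
by apply: C1D => //; apply: IH.
Qed.

Lemma cintD (t0 t1 : R) f g : ccontinuous f -> ccontinuous g ->
  cint t0 t1 (fun t => f t + g t) = cint t0 t1 f + cint t0 t1 g.
Proof.
move=> [cf1 cf2] [cg1 cg2]; rewrite /cint.
under eq_Rintegral do rewrite ReD.
under [X in _ + iC R * X%:C]eq_Rintegral do rewrite ImD.
by rewrite !RintegralD //; try exact: continuous_integrable; apply: complexP => /=; ring.
Qed.

Lemma cintZl (t0 t1 : R) x f : ccontinuous f ->
  cint t0 t1 (fun t => x * f t) = x * cint t0 t1 f.
Proof.
move=> [cf1 cf2]; rewrite /cint.
under eq_Rintegral do rewrite ReM.
under [X in _ + iC R * X%:C]eq_Rintegral do rewrite ImM.
have iZ (h : R -> R) r : continuous h ->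
    lebesgue_measure.-integrable `[t0, t1] (EFin \o (fun t => r * h t)).
  move=> ch; apply: continuous_integrable => t.
  exact: continuousM_fun (@cst_continuous R R r t) (ch t).
rewrite RintegralB ?RintegralD ?iZ // !RintegralZl //; try exact: continuous_integrable.
by case: x => ? ?; apply: complexP => /=; ring.
Qed.

Lemma cint0 (t0 t1 : R) : cint t0 t1 (fun _ => 0) = 0.
Proof.
rewrite /cint (_ : (fun _ => _) = cst 0) // /Rintegral integral0 /=.
by apply: complexP => /=; ring.
Qed.

Lemma cint_sum (t0 t1 : R) n (F : 'I_n -> R -> R[i]) :
  (forall i, ccontinuous (F i)) ->
  cint t0 t1 (fun t => \sum_(i < n) F i t) = \sum_(i < n) cint t0 t1 (F i).
Proof.
elim: n F => [|n IH] F cF.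
  by under eq_fun do rewrite big_ord0; rewrite big_ord0 cint0.
under eq_fun do rewrite big_ord_recl.
rewrite big_ord_recl cintD //; first by rewrite IH.
by apply: ccontinuous_sum.
Qed.

Lemma cint_FTC f f' (T : R) : 0 < T -> C1 f f' -> cint 0 T f' = f T - f 0.
Proof.
move=> T_gt0 [df [cf1' cf2']]; rewrite /cint.
rewrite (Rintegral_FTC T_gt0 (fun t => (df t).1) cf1').
rewrite (Rintegral_FTC T_gt0 (fun t => (df t).2) cf2').
by apply: complexP; rewrite /= ?ReD ?ImD ?ReN ?ImN /=; ring.
Qed.

Lemma twopi_iC_neq0 : (2 * pi)%:C * iC R != 0.
Proof.
apply: mulf_neq0; apply/eqP.
  by move=> /(congr1 (@complex.Re R)) /= /eqP; apply/negP; rewrite lt0r_neq0 // mulr_gt0 ?pi_gt0.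
by move=> /(congr1 (@complex.Im R)) /= /eqP; rewrite oner_eq0.
Qed.

End ComplexCalculus.

Section Circle.
Variable R : realType.

Lemma is_derive_circle (r p q t : R) :
  is_derive t 1 (fun s => r * (cos s * p + sin s * q)) (r * (- sin t * p + cos t * q)).
Proof.
have dcst (x : R) : is_derive t 1 (fun _ : R => x) 0 by exact: is_derive_cst.
apply: is_derive_eq (is_deriveM_fun (dcst r) (is_deriveD_fun
  (is_deriveM_fun (is_derive_cos t) (dcst p)) (is_deriveM_fun (is_derive_sin t) (dcst q)))) _.
ring.
Qed.

Lemma continuous_circle_derive (r p q : R) :
  continuous (fun t : R => r * (- sin t * p + cos t * q)).
Proof.
move=> t; have cst (x : R) := @cst_continuous R R x t.
exact: continuousM_fun (cst r) (continuousD_fun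
  (continuousM_fun (continuousN_fun (@continuous_sin R t)) (cst p))
  (continuousM_fun (@continuous_cos R t) (cst q))).
Qed.

Lemma periodicz (f : R -> R) (T : R) : periodic f T ->
  forall (z : int) (x : R), f (x + z%:~R * T) = f x.
Proof.
move=> fT [N|N] x; first by rewrite mulrzl; exact: periodicn.
by rewrite NegzE mulNr -[in RHS](subrK (N.+1%:~R * T) x) -pmulrn mulr_natl periodicn.
Qed.

Lemma cos_sin_mod_2pi (t : R) :
  exists2 t', 0 <= t' <= 2 * pi & cos t' = cos t /\ sin t' = sin t.
Proof.
have twopi_gt0 : 0 < 2 * pi :> R by rewrite mulr_gt0 ?pi_gt0.
set z := Num.floor (t / (2 * pi)).
have ->: t = (t - z%:~R * (2 * pi)) + z%:~R * (2 * pi) by rewrite subrK.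
exists (t - z%:~R * (2 * pi)).
  apply/andP; split; first by rewrite subr_ge0 -ler_pdivlMr ?floor_le.
  have := floorD1_gt (t / (2 * pi)); rewrite -/z intrD ltr_pdivrMr // mulrDl mul1r.
  lra.
have twopi : 2 * pi = pi *+ 2 :> R by rewrite mulr_natl.
by rewrite twopi !periodicz //; [exact: sinD2pi|exact: cosD2pi].
Qed.

End Circle.

Section Algebra.
Variables (R : realType) (n m : nat) (u : 'I_n -> 'I_n)
  (Ups : 'I_n -> 'I_n -> 'I_n -> R[i]).
Hypothesis m_gt0 : (0 < m)%N.
Hypothesis m_le_n : (m <= n)%N.
Hypothesis u_lt_m : forall s : 'I_n, (m <= s)%N -> (u s < m)%N.
Hypothesis amul_comm_assoc : comm_assoc m u Ups.

Local Notation mul := (amul m u Ups).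
Local Notation one := (aone R n m).
Local Notation c := (sconst m u Ups).
Implicit Types k : 'I_n.

(* [idem k] is the index u of the idempotent with I_u I_k = I_k: u_k in the
   paper for k in N, and k itself for k in S. *)
Definition idem (k : 'I_n) : 'I_n := if (k < m)%N then k else u k.

Lemma idem_lt_m k : (idem k < m)%N.
Proof. by rewrite /idem; case: (ltnP k m) => // /u_lt_m. Qed.

Lemma sconst_S (r s k : 'I_n) : (r < m)%N -> c r s k = ((s == k) && (r == idem k))%:R.
Proof.
move=> rm; rewrite /sconst /idem rm; case: (eqVneq s k) => [<-|sk] /=.
  by case: (ltnP s m) => _; rewrite ?eqxx ?andbT // eq_sym andbb.
case: (ltnP s m) => _; last by rewrite andbF.
by case: (eqVneq r s) => [->|] //=; rewrite eq_sym (negbTE sk).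
Qed.

Lemma sum_aone_sconst (s k : 'I_n) : \sum_(r < n) one r * c r s k = (s == k)%:R.
Proof.
rewrite (bigD1 (idem k)) //= big1 ?addr0 => [|r rk].
  by rewrite ffunE idem_lt_m sconst_S ?idem_lt_m // eqxx andbT mul1r.
rewrite ffunE; case: (ltnP r m) => rm; last by rewrite mul0r.
by rewrite sconst_S // (negbTE rk) andbF mulr0.
Qed.

Lemma amul1 x : mul one x = x.
Proof.
apply/ffunP => k; rewrite ffunE exchange_big /=.
transitivity (\sum_(s < n) x s * (s == k)%:R).
  apply: eq_bigr => s _; rewrite -sum_aone_sconst mulr_sumr.
  by apply: eq_bigr => r _; rewrite mulrCA mulrA.
rewrite (bigD1 k) //= eqxx mulr1 big1 ?addr0 // => s sk.
by rewrite (negbTE sk) mulr0.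
Qed.

Lemma amulDl x y z : mul (x + y) z = mul x z + mul y z.
Proof.
apply/ffunP => k; rewrite !ffunE -big_split; apply: eq_bigr => r _.
by rewrite -big_split; apply: eq_bigr => s _; rewrite ffunE !mulrDl.
Qed.

Lemma aone_neq0 : one != 0.
Proof.
apply/eqP => /ffunP /(_ (Ordinal (leq_trans m_gt0 m_le_n))).
by rewrite !ffunE m_gt0 => /eqP; rewrite oner_eq0.
Qed.

(* [alg R n] is a type of finite functions and so already carries the pointwise
   ring structure; [Anm] is a copy of it carrying the multiplication of A_n^m. *)
Definition Anm := alg R n.
HB.instance Definition _ := GRing.Zmodule.on Anm.
HB.instance Definition _ := GRing.Zmodule_isComNzRing.Build Anm
  (fun x y z => esym (amul_comm_assoc.2 x y z)) amul_comm_assoc.1 amul1 amulDl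
  aone_neq0.
HB.instance Definition _ := GRing.Lmodule.on Anm.

Lemma Anm_scalerAl (l : R[i]) (x y : Anm) : l *: (x * y) = l *: x * y.
Proof.
apply/ffunP => k; rewrite !ffunE scaler_sumr; apply: eq_bigr => r _.
by rewrite scaler_sumr; apply: eq_bigr => s _; rewrite ffunE !scalerAl.
Qed.

HB.instance Definition _ := GRing.Lmodule_isLalgebra.Build R[i] Anm Anm_scalerAl.
HB.instance Definition _ := GRing.Lalgebra_isComAlgebra.Build R[i] Anm.

Lemma coordD (x y : Anm) k : (x + y) k = x k + y k. Proof. by rewrite ffunE. Qed.
Lemma coordN (x : Anm) k : (- x) k = - x k. Proof. by rewrite ffunE. Qed.
Lemma coordB (x y : Anm) k : (x - y) k = x k - y k. Proof. by rewrite !ffunE. Qed.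
Lemma coordZ (l : R[i]) (x : Anm) k : (l *: x) k = l * x k. Proof. by rewrite ffunE. Qed.
Lemma coord1 k : (1 : Anm) k = (k < m)%N%:R. Proof. by rewrite ffunE. Qed.
Lemma coord_natM (x : Anm) j k : (j%:R * x) k = j%:R * x k.
Proof. by rewrite mulr_natl ffunMnE mulr_natl. Qed.
Lemma coordM (x y : Anm) k : (x * y) k = \sum_r \sum_s x r * y s * c r s k.
Proof. by rewrite ffunE. Qed.

Lemma sconst_lt_m (r s k : 'I_n) : (k < m)%N -> c r s k = ((r == k) && (s == k))%:R.
Proof.
move=> km; case: (ltnP r m) => rm; first by rewrite sconst_S // /idem km andbC.
have /negbTE rk : r != k by rewrite neq_ltn (leq_trans km rm) orbT.
rewrite /sconst ltnNge rm /= rk /=; case: (ltnP s m) => _; first by rewrite [k == r]eq_sym rk andbF.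
by rewrite ltnNge (leq_trans (ltnW km)) // leq_max rm.
Qed.

Lemma coordM_S (x y : Anm) k : (k < m)%N -> (x * y) k = x k * y k.
Proof.
move=> km; rewrite coordM (bigD1 k) //= [X in _ + X]big1 ?addr0 => [|r rk]; last first.
  by apply: big1 => s _; rewrite sconst_lt_m // (negbTE rk) mulr0.
rewrite (bigD1 k) //= [X in _ + X]big1 ?addr0 => [|s sk].
  by rewrite sconst_lt_m // eqxx mulr1.
by rewrite sconst_lt_m // eqxx (negbTE sk) mulr0.
Qed.

Definition vanish_below (i : nat) (x : Anm) := forall k : 'I_n, (k < i)%N -> x k = 0.
Local Notation radical := (vanish_below m).
Definition semisimple (x : Anm) := forall k : 'I_n, (m <= k)%N -> x k = 0.

Lemma vanish_belowM i j (x y : Anm) : (m <= i)%N -> (m <= j)%N ->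
  vanish_below i x -> vanish_below j y -> vanish_below (maxn i j).+1 (x * y).
Proof.
move=> mi mj x0 y0 k kij; rewrite coordM; apply: big1 => r _; apply: big1 => s _.
case: (ltnP r i) => ri; first by rewrite x0 // !mul0r.
case: (ltnP s j) => sj; first by rewrite y0 // mulr0 mul0r.
rewrite /sconst ltnNge (leq_trans mi ri) ltnNge (leq_trans mj sj) /=.
by case: ltnP => [|_]; rewrite ?mulr0 //; lia.
Qed.

Lemma semisimpleM (x y : Anm) : semisimple x -> semisimple y -> semisimple (x * y).
Proof.
move=> x0 y0 k mk; rewrite coordM; apply: big1 => r _; apply: big1 => s _.
case: (ltnP r m) => rm; last by rewrite x0 // !mul0r.
case: (ltnP s m) => sm; last by rewrite y0 // mulr0 mul0r.
have /negbTE sk : s != k by rewrite neq_ltn (leq_trans sm mk).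
by rewrite sconst_S // sk mulr0.
Qed.

Hypothesis dimN_le3 : (n - m <= 3)%N.

Lemma radical_mul4 (w1 w2 w3 w4 : Anm) : radical w1 -> radical w2 -> radical w3 ->
  radical w4 -> w1 * w2 * w3 * w4 = 0.
Proof.
move=> r1 r2 r3 r4; have mm := leqnn m.
have r12 := vanish_belowM mm mm r1 r2; rewrite maxnn in r12.
have r123 := vanish_belowM (leqnSn m) mm r12 r3.
rewrite (maxn_idPl (leqnSn m)) in r123.
have r1234 := vanish_belowM (leqW (leqnSn m)) mm r123 r4.
rewrite (maxn_idPl (leqW (leqnSn m))) in r1234.
apply/ffunP => k; rewrite [RHS]ffunE r1234 //.
by rewrite -addn3 (leq_trans (ltn_ord k)) // -leq_subLR.
Qed.

Definition sproj (z : Anm) : Anm := [ffun k : 'I_n => if (k < m)%N then z k else 0].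
Definition sinv (z : Anm) : Anm := [ffun k : 'I_n => if (k < m)%N then (z k)^-1 else 0].
Definition sunit (z : Anm) := forall k : 'I_n, (k < m)%N -> z k != 0.
Definition sdefect (z : Anm) : Anm := sinv z * z - 1.
(* The derivative of [sdefect z] when z moves with velocity z', since
   sinv z moves with velocity - sinv z ^+ 2 * sproj z'. *)
Definition sdefect_deriv (z z' : Anm) : Anm := sinv z * z' - sinv z ^+ 2 * sproj z' * z.

Lemma semisimple_sproj z : semisimple (sproj z).
Proof. by move=> k mk; rewrite ffunE ltnNge mk. Qed.

Lemma semisimple_sinv z : semisimple (sinv z).
Proof. by move=> k mk; rewrite ffunE ltnNge mk. Qed.

Lemma radical_sdefect z : sunit z -> radical (sdefect z).
Proof.
by move=> zS k km; rewrite coordB coordM_S // coord1 ffunE km mulVf ?zS // subrr.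
Qed.

Lemma radical_sdefect_deriv z z' : sunit z -> radical (sdefect_deriv z z').
Proof.
move=> zS k km; rewrite /sdefect_deriv expr2 coordB !coordM_S // !ffunE km.
by field; apply: zS.
Qed.

Lemma ainvE z : sunit z -> let w := sdefect z in
  ainv m u Ups z = sinv z * (1 - w + w * w - w * w * w).
Proof.
move=> zS w; set v := sinv z * _.
have w4 : w * w * w * w = 0 by apply: radical_mul4; apply: radical_sdefect.
have zv : z * v = 1.
  have -> : z * v = 1 - w * w * w * w by rewrite /v /w /sdefect; ring.
  by rewrite w4 subr0.
rewrite /ainv; apply: xget_subset1 => [|y1 y2 zy1 zy2]; first exact: zv.
have zy1' : z * y1 = 1 := zy1; have zy2' : z * y2 = 1 := zy2.
by rewrite -(mulr1 (y1 : Anm)) -zy2' mulrA (mulrC (y1 : Anm)) zy1' mul1r.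
Qed.

Lemma ainv_S z k : sunit z -> (k < m)%N -> ainv m u Ups z k = (z k)^-1.
Proof.
move=> zS km; rewrite ainvE //= coordM_S // ffunE km.
set w := sdefect z; rewrite (_ : 1 - w + w * w - w * w * w = 1 - w * (1 - w + w * w)).
  by rewrite coordB coord1 km coordM_S // (radical_sdefect zS) // mul0r subr0 mulr1.
by ring.
Qed.

Lemma coord_logder_radical (z z' : Anm) k : sunit z -> (m <= k)%N ->
  (z' * ainv m u Ups z) k =
  ((1 - sdefect z + sdefect z * sdefect z) * sdefect_deriv z z') k.
Proof.
move=> zS mk; rewrite ainvE //=; set w := sdefect z; set w' := sdefect_deriv z z'.
have w3w' : w * w * w * w' = 0.
  by apply: radical_mul4; by [apply: radical_sdefect|apply: radical_sdefect_deriv].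
have w4 : w * w * w * w = 0 by apply: radical_mul4; apply: radical_sdefect.
have -> : z' * (sinv z * (1 - w + w * w - w * w * w)) =
    (1 - w + w * w) * w' - w * w * w * w' + sinv z * sproj z' * (1 - w * w * w * w).
  by rewrite /w' /w /sdefect_deriv /sdefect; ring.
rewrite w3w' w4 !subr0 mulr1 coordD.
by rewrite (semisimpleM (semisimple_sinv z) (semisimple_sproj z')) // addr0.
Qed.

Definition Acontinuous (F : R -> Anm) := forall k, ccontinuous (fun t => F t k).
Definition AC1 (F F' : R -> Anm) := forall k, C1 (fun t => F t k) (fun t => F' t k).

Lemma AC1_Acontinuous F F' : AC1 F F' -> Acontinuous F.
Proof. by move=> dF k; apply: C1_ccontinuous (dF k). Qed.

Lemma AcontinuousM F G : Acontinuous F -> Acontinuous G ->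
  Acontinuous (fun t => F t * G t).
Proof.
move=> cF cG k; under eq_fun do rewrite coordM.
apply: ccontinuous_sum => r; apply: ccontinuous_sum => s.
by apply: ccontinuousM (ccontinuous_cst _); apply: ccontinuousM.
Qed.

Lemma AC1_ext F G F' G' : AC1 F F' -> F =1 G -> F' =1 G' -> AC1 G G'.
Proof. by move=> dF /funext <- /funext <-. Qed.

Lemma AC1_cst (x : Anm) : AC1 (fun _ => x) (fun _ => 0).
Proof. by move=> k; apply: C1_ext (C1_cst (x k)) _ _ => t //; rewrite ffunE. Qed.

Lemma AC1D F G F' G' : AC1 F F' -> AC1 G G' ->
  AC1 (fun t => F t + G t) (fun t => F' t + G' t).
Proof. by move=> dF dG k; apply: C1_ext (C1D (dF k) (dG k)) _ _ => t; rewrite coordD. Qed.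

Lemma AC1B F G F' G' : AC1 F F' -> AC1 G G' ->
  AC1 (fun t => F t - G t) (fun t => F' t - G' t).
Proof.
by move=> dF dG k; apply: C1_ext (C1D (dF k) (C1N (dG k))) _ _ => t; rewrite coordB.
Qed.

Lemma AC1M F G F' G' : AC1 F F' -> AC1 G G' ->
  AC1 (fun t => F t * G t) (fun t => F' t * G t + F t * G' t).
Proof.
move=> dF dG k; apply: C1_ext (C1_sum (fun r => C1_sum (fun s =>
  C1M (C1M (dF r) (dG s)) (C1_cst (c r s k))))) _ _ => t; first by rewrite coordM.
rewrite coordD !coordM -big_split; apply: eq_bigr => r _.
by rewrite -big_split; apply: eq_bigr => s _ /=; ring.
Qed.

Section LogDerivative.
Variables (Z Z' : R -> Anm).
Hypothesis dZ : AC1 Z Z'.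
Hypothesis Z_sunit : forall t, sunit (Z t).

Lemma AC1_sinv :
  AC1 (fun t => sinv (Z t)) (fun t => - (sinv (Z t) ^+ 2 * sproj (Z' t))).
Proof.
move=> k; case: (ltnP k m) => km.
  apply: C1_ext (C1V (dZ k) (fun t => Z_sunit t km)) _ _ => t; first by rewrite ffunE km.
  by rewrite coordN expr2 !coordM_S // !ffunE km; ring.
apply: C1_ext (C1_cst 0) _ _ => t; first by rewrite ffunE ltnNge km.
rewrite coordN expr2 (semisimpleM (semisimpleM (semisimple_sinv _) (semisimple_sinv _))
  (semisimple_sproj _)) //.
by rewrite oppr0.
Qed.

Lemma AC1_sdefect :
  AC1 (fun t => sdefect (Z t)) (fun t => sdefect_deriv (Z t) (Z' t)).
Proof.
apply: AC1_ext (AC1B (AC1M AC1_sinv dZ) (AC1_cst 1)) _ _ => t //.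
by rewrite /sdefect_deriv; ring.
Qed.

Lemma Acontinuous_ainv : Acontinuous (fun t => ainv m u Ups (Z t)).
Proof.
have dW := AC1_sdefect.
have := AC1_Acontinuous (AC1M AC1_sinv
  (AC1B (AC1D (AC1B (AC1_cst 1) dW) (AC1M dW dW)) (AC1M (AC1M dW dW) dW))).
by rewrite (funext (fun t => ainvE (Z_sunit t))).
Qed.

Lemma cint_logder_radical (T : R) k : 0 < T -> Z T = Z 0 -> (m <= k)%N ->
  cint 0 T (fun t => (Z' t * ainv m u Ups (Z t)) k) = 0.
Proof.
move=> T_gt0 ZT mk.
set W := fun t => sdefect (Z t); set W' := fun t => sdefect_deriv (Z t) (Z' t).
have dW : AC1 W W' := AC1_sdefect.
(* H is 6 log (1 + W), truncated using W ^+ 4 = 0. *)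
pose H t := 6%:R * W t - 3%:R * (W t * W t) + 2%:R * (W t * W t * W t).
have dH : AC1 H (fun t => 6%:R * ((1 - W t + W t * W t) * W' t)).
  apply: AC1_ext (AC1D (AC1B (AC1M (AC1_cst 6%:R) dW)
      (AC1M (AC1_cst 3%:R) (AC1M dW dW)))
    (AC1M (AC1_cst 2%:R) (AC1M (AC1M dW dW) dW))) _ _ => t //.
  ring.
have -> : (fun t => (Z' t * ainv m u Ups (Z t)) k) =
    (fun t => 6%:R^-1 * (6%:R * ((1 - W t + W t * W t) * W' t)) k).
  by apply/funext => t; rewrite coord_logder_radical // coord_natM mulKf.
rewrite cintZl; last exact: (dH k).2.
by rewrite (cint_FTC T_gt0 (dH k)) /H /W ZT subrr mulr0.
Qed.

Lemma cint_logder (T : R) : 0 < T -> Z T = Z 0 ->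
  (forall k, (k < m)%N -> winding0 0 T (fun t => Z t k) = 1) ->
  [ffun k => cint 0 T (fun t => (Z' t * ainv m u Ups (Z t)) k)] =
  [ffun k => (2 * pi)%:C * iC R * one k].
Proof.
move=> T_gt0 ZT wind; apply/ffunP => k; rewrite [LHS]ffunE [RHS]ffunE ffunE.
case: (ltnP k m) => km; last by rewrite cint_logder_radical // mulr0.
rewrite mulr1 -[RHS]mul1r -(wind k km) /winding0 divfK ?twopi_iC_neq0 //.
congr cint; apply/funext => t.
by rewrite coordM_S // ainv_S // (cderive_C1 t (dZ k)).
Qed.

End LogDerivative.

Lemma cint_coordM (x : Anm) (G : R -> 'I_n -> R[i]) (T : R) k :
  (forall j, ccontinuous (G^~ j)) ->
  (x * [ffun j => cint 0 T (G^~ j)]) k = cint 0 T (fun t => (x * [ffun j => G t j]) k).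
Proof.
move=> cG; have -> : (fun t => (x * [ffun j => G t j]) k) =
    (fun t => \sum_r \sum_s x r * c r s k * G t s).
  apply/funext => t; rewrite coordM; apply: eq_bigr => r _.
  by apply: eq_bigr => s _; rewrite ffunE mulrAC.
rewrite coordM cint_sum => [|r]; last first.
  by apply: ccontinuous_sum => s; apply: ccontinuousM (ccontinuous_cst _) (cG s).
apply: eq_bigr => r _; rewrite cint_sum => [|s]; last first.
  exact: ccontinuousM (ccontinuous_cst _) (cG s).
by apply: eq_bigr => s _; rewrite cintZl // ffunE mulrAC.
Qed.

Section Zeta.
Variables a b : Anm.

Lemma zetaE (x y z : R) : zeta m a b x y z = x%:C%:A + y%:C *: a + z%:C *: b :> Anm.
Proof. by apply/ffunP => k; rewrite !ffunE. Qed.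

Lemma AC1_zeta (h h' : 'I_3 -> R -> R) :
  (forall j (t : R), is_derive t 1 (h j) (h' j t)) -> (forall j, continuous (h' j)) ->
  AC1 (fun t => zeta m a b (h 0 t) (h 1 t) (h 2%:R t))
      (fun t => zeta m a b (h' 0 t) (h' 1 t) (h' 2%:R t)).
Proof.
move=> dh ch' k; have C1h j (x : R[i]) := C1M (C1_real (dh j) (ch' j)) (C1_cst x).
apply: C1_ext (C1D (C1D (C1h 0 (one k)) (C1h 1 (a k))) (C1h 2%:R (b k))) _ _ => t.
  by rewrite /zeta !ffunE.
by rewrite /zeta !ffunE !mulr0 !addr0.
Qed.

Lemma curve_intE (g g' : 'I_3 -> R -> R) (T : R) (Psi : R -> Anm) :
  (forall j t, derive1 (g j) t = g' j t) -> (forall j, continuous (g' j)) ->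
  Acontinuous Psi ->
  curve_int m u Ups a b g 0 T Psi = [ffun k => cint 0 T (fun t =>
    ((zeta m a b (g' 0 t) (g' 1 t) (g' 2%:R t) : Anm) * Psi t) k)].
Proof.
move=> dg cg' cPsi; have dgE j : derive1 (g j) = g' j := funext (dg j).
pose F j t : Anm := [ffun i => Psi t i * (g' j t)%:C].
have FE j t : F j t = (g' j t)%:C *: Psi t by apply/ffunP => i; rewrite !ffunE mulrC.
have cG j i : ccontinuous (fun t => Psi t i * (g' j t)%:C).
  exact: ccontinuousM (cPsi i) (ccontinuous_real (cg' j)).
have caF (x : Anm) j : Acontinuous (fun t => x * F j t).
  apply: AcontinuousM => i; first exact: ccontinuous_cst.
  by under eq_fun do rewrite ffunE; exact: cG.
rewrite /curve_int /= !dgE; apply/ffunP => k.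
rewrite !coordD [in RHS]ffunE ffunE !cint_coordM => [|i|i]; try exact: cG.
rewrite -(cintD 0 T (cG 0 k) (caF a 1 k)).
rewrite -(cintD 0 T (ccontinuousD (cG 0 k) (caF a 1 k)) (caF b 2%:R k)).
congr cint; apply/funext => t.
rewrite -/(F 1 t) -/(F 2%:R t) !FE mulrC -coordZ -!coordD zetaE.
by rewrite !mulrDl mulr_algl -!scalerAl -!scalerAr.
Qed.

End Zeta.

End Algebra.

Theorem theorem7 (R : realType) (n m : nat)
    (u : 'I_n -> 'I_n) (Ups : 'I_n -> 'I_n -> 'I_n -> R[i])
    (a b : alg R n) (Rad : R) (p q : 'I_3 -> R) :
  (1 <= m)%N -> (m <= n)%N ->
  (* u_s in {1..m} for s in {m+1..n} *)
  (forall s : 'I_n, (m <= s)%N -> (u s < m)%N) ->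
  comm_assoc m u Ups ->
  (* dim_C N = n - m <= 3 *)
  (n - m <= 3)%N ->
  (* e1 = 1, e2 = a, e3 = b linearly independent over R *)
  (forall x y z : R, zeta m a b x y z = 0 -> [/\ x = 0, y = 0 & z = 0]) ->
  (* f_u(E_3) = C for all u *)
  (forall k : 'I_n, (k < m)%N ->
     forall w : R[i], exists x y z : R, zeta m a b x y z k = w) ->
  (* C' : circle of radius Rad > 0 centered at 0 in the plane spanned by the
     orthonormal vectors p, q, parametrized by t |-> Rad (cos t p + sin t q) *)
  0 < Rad ->
  \sum_(j < 3) p j ^+ 2 = 1 -> \sum_(j < 3) q j ^+ 2 = 1 ->
  \sum_(j < 3) p j * q j = 0 ->
  let g := fun (j : 'I_3) (t : R) => Rad * (cos t * p j + sin t * q j) in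
  let zC := fun t : R => zeta m a b (g 0 t) (g 1 t) (g 2%:R t) in
  (* each f_u(C) is a positively oriented closed Jordan curve around 0 *)
  (forall k : 'I_n, (k < m)%N ->
     pos_jordan_around0 0 (2 * pi) (fun t => zC t k)) ->
  curve_int m u Ups a b g 0 (2 * pi) (fun t => ainv m u Ups (zC t))
  = [ffun k => (2 * pi)%:C * iC R * aone R n m k].
Proof.
move=> m_gt0 m_le_n u_lt_m CA dimN _ _ _ _ _ _ g zC around0.
pose g' j t := Rad * (- sin t * p j + cos t * q j).
have dg j (t : R) : is_derive t 1 (g j) (g' j t) := is_derive_circle Rad (p j) (q j) t.
have dg1 j t : derive1 (g j) t = g' j t by rewrite derive1E; exact: derive_val.
have cg' j : continuous (g' j) by exact: continuous_circle_derive.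
have dzC := AC1_zeta m a b dg cg'.
have zC_sunit t : sunit m (zC t).
  move=> k km; have [_ [zC_neq0 _]] := around0 k km.
  have [t' t'_in [ct st]] := cos_sin_mod_2pi t.
  by rewrite /zC /g -ct -st; apply: zC_neq0.
rewrite (curve_intE m_gt0 m_le_n u_lt_m CA _ _ _ dg1 cg'
  (Acontinuous_ainv m_gt0 m_le_n u_lt_m CA dimN dzC zC_sunit)).
apply: (cint_logder m_gt0 m_le_n u_lt_m CA dimN dzC zC_sunit).
- by rewrite mulr_gt0 ?pi_gt0.
- by rewrite /zC /g mulr_natl cos2pi sin2pi cos0 sin0.
- by move=> k km; have [_ [_ ->]] := around0 k km.
Qed.
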